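(* Let $\Gamma,\Delta$ be finite multisets of $\mathcal{L}_{A_m}^{\Box}$-formulas and $\Pi,\Sigma$ finite multisets of variables such that the sequent $\Box\Gamma,\Pi\Rightarrow\Sigma,\Box\Delta$ is $\mathsf{K(A)}$-valid. Then $\Pi=\Sigma$ and $\Box\Gamma\Rightarrow\Box\Delta$ is $\mathsf{K(A)}$-valid.
   Context: $\mathcal{L}_{A_m}^{\Box}$-formulas are built from a countably infinite set $\mathrm{Var}$ of variables using binary $\to$ and unary $\Box$. Fix $p_0\in\mathrm{Var}$; $\overline{0}:=p_0\to p_0$, $\neg\varphi:=\varphi\to\overline{0}$, $\varphi\&\psi:=\neg\varphi\to\psi$. A $\mathsf{K(A)}$-model $\langle W,R,V\rangle$: nonempty $W$, $R\subseteq W\times W$, $V\colon\mathrm{Var}\times W\to[-r,r]$ for some real $r\ge0$, extended by $V(\varphi\to\psi,x)=V(\psi,x)-V(\varphi,x)$, $V(\Box\varphi,x)=\inf_{\mathbb{R}}\{V(\varphi,y):Rxy\}$ (empty infimum $=0$). A formula is $\mathsf{K(A)}$-valid if its value is $\ge0$ at every world of every model. A sequent $\Gamma\Rightarrow\Delta$ (pair of finite multisets of formulas) is $\mathsf{K(A)}$-valid if $\mathcal{I}(\Gamma\Rightarrow\Delta)$ is, where $\mathcal{I}(\varphi_1,\dots,\varphi_n\Rightarrow\psi_1,\dots,\psi_m):=(\varphi_1\&\dots\&\varphi_n)\to(\psi_1\&\dots\&\psi_m)$, empty $\&$-combination $=\overline{0}$. $\Box\Gamma=[\Box\varphi:\varphi\in\Gamma]$;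 commas denote multiset union. *)

From mathcomp Require Import all_boot all_order all_algebra.
From mathcomp Require Import all_classical all_reals.
From mathcomp Require Import Rstruct.
Unset Printing Implicit Defensive.
Import Order.TTheory GRing.Theory Num.Theory.
Local Open Scope classical_set_scope.
Local Open Scope ring_scope.

Inductive fml : Type :=
| Var : nat -> fml
| Imp : fml -> fml -> fml
| Box : fml -> fml.

Definition p0 : nat := 0%N.
Definition zero : fml := Imp (Var p0) (Var p0).
Definition Neg (a : fml) : fml := Imp a zero.
Definition And (a b : fml) : fml := Imp (Neg a) b.

Fixpoint bigAnd (s : seq fml) : fml :=
  match s with
  | [::] => zero
  | [:: a] => a
  | a :: s' => And a (bigAnd s')
  end.

Record model : Type := Model {
  world : Type;
  world_nonempty : inhabited world;
  rel : world -> world -> Prop;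
  valv : nat -> world -> Rdefinitions.R;
  bound : Rdefinitions.R;
  bound_ge0 : 0 <= bound;
  valv_bounded : forall p x, - bound <= valv p x <= bound
}.

(* value of a formula at a world; inf over the reals, with inf set0 = 0
   (this is the library convention, lemma inf0) *)
Fixpoint value (M : model) (a : fml) (x : world M) : Rdefinitions.R :=
  match a with
  | Var p => valv M p x
  | Imp a b => value M b x - value M a x
  | Box a => inf [set value M a y | y in [set y | rel M x y]]
  end.

Definition KA_valid (a : fml) : Prop :=
  forall (M : model) (x : world M), 0 <= value M a x.

(* sequents are pairs of finite multisets, represented as sequences *)
Definition seq_interp (G D : seq fml) : fml := Imp (bigAnd G) (bigAnd D).

Definition KA_valid_seq (G D : seq fml) : Prop := KA_valid (seq_interp G D).

From Pilot Require Import Defs.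
From mathcomp Require Import all_boot all_order all_algebra.
From mathcomp Require Import all_classical all_reals.
From mathcomp Require Import Rstruct.
From mathcomp Require Import lra.
Import Order.TTheory GRing.Theory Num.Theory.
Local Open Scope classical_set_scope.
Local Open Scope ring_scope.

(* The value of [Box G, Pi => Sigma, Box D] splits into the variable part
   [sum Sigma - sum Pi] and the value of [Box G => Box D].  Evaluating at a
   single world without successors kills every boxed formula (an empty
   infimum is 0), so validity forces [sum Sigma - sum Pi >= 0] for every
   valuation; valuations [+1] and [-1] on the indicator of one variable
   give equal multiplicities.  Conversely, a fresh root whose successors are
   those of a given world [x] and whose variables are all 0 kills the
   variable part while giving every boxed formula its value at [x]. *)

Local Notation R := Rdefinitions.R.

Lemma value_bigAnd (M : model) (s : seq fml) (x : world M) :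
  value M (bigAnd s) x = \sum_(a <- s) value M a x.
Proof.
elim: s => [|a s IHs]; first by rewrite big_nil /= subrr.
case: s IHs => [|b s] IHs; first by rewrite big_cons big_nil addr0.
by rewrite big_cons -IHs /= subrr; lra.
Qed.

Lemma value_seq_interp (M : model) (G D : seq fml) (x : world M) :
  value M (seq_interp G D) x = \sum_(a <- D) value M a x - \sum_(a <- G) value M a x.
Proof. by rewrite /= !value_bigAnd. Qed.

Lemma value_seq_interp_boxes_vars (M : model) (G D : seq fml) (P S : seq nat)
    (x : world M) :
  value M (seq_interp (map Box G ++ map Var P) (map Var S ++ map Box D)) x =
  (\sum_(p <- S) valv M p x - \sum_(p <- P) valv M p x)
  + value M (seq_interp (map Box G) (map Box D)) x.
Proof. by rewrite !value_seq_interp !big_cat !big_map /=; lra. Qed.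

Lemma value_Box_dead_end (M : model) (a : fml) (x : world M) :
  (forall y, ~ Defs.rel M x y) -> value M (Box a) x = 0.
Proof.
move=> dead; rewrite /= -[RHS](inf0 R); congr inf.
by apply/seteqP; split=> r // [y /dead].
Qed.

Section PointModel.

Variables (v : nat -> R) (r : R).
Hypothesis v_bounded : forall p, - r <= v p <= r.

Lemma point_bound_ge0 : 0 <= r.
Proof. by have /andP[] := v_bounded 0; lra. Qed.

Definition point_model : model :=
  @Model unit (inhabits tt) (fun _ _ => False) (fun p _ => v p) r
    point_bound_ge0 (fun p _ => v_bounded p).

Lemma point_model_boxes_vars (G D : seq fml) (P S : seq nat) :
  value point_model (seq_interp (map Box G ++ map Var P) (map Var S ++ map Box D)) tt
  = \sum_(p <- S) v p - \sum_(p <- P) v p.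
Proof.
have boxes0 (l : seq fml) : \sum_(a <- map Box l) value point_model a tt = 0.
  by rewrite big_map big1 // => a _; apply: value_Box_dead_end => ? [].
by rewrite value_seq_interp_boxes_vars value_seq_interp !boxes0 subrr addr0.
Qed.

End PointModel.

Lemma indicator_bounded (k : R) (A : pred nat) (p : nat) :
  - `|k| <= k *+ A p <= `|k|.
Proof. by rewrite -ler_norml; case: (A p); rewrite ?normr0 ?normr_ge0. Qed.

Lemma sumr_indicator (V : nmodType) (k : V) (A : pred nat) (s : seq nat) :
  \sum_(p <- s) k *+ A p = k *+ count A s.
Proof.
elim: s => [|p s IHs]; first by rewrite big_nil.
by rewrite big_cons IHs /= mulrnDr.
Qed.

Lemma valid_boxes_vars_perm_eq (G D : seq fml) (P S : seq nat) :
  KA_valid_seq (map Box G ++ map Var P) (map Var S ++ map Box D) -> perm_eq P S.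
Proof.
move=> valid; apply/permP => A.
have sign_ge0 (k : R) : 0 <= k *+ count A S - k *+ count A P.
  have := valid (point_model _ _ (indicator_bounded k A)) tt.
  by rewrite point_model_boxes_vars !sumr_indicator.
have := sign_ge0 1; have := sign_ge0 (-1).
rewrite !mulNrn => le1 le2; apply/eqP; rewrite eqn_leq -!(ler_nat R); lra.
Qed.

Section FreshRoot.

Variables (M : model) (x : world M).

Definition fresh_root_rel (u v : option (world M)) : Prop :=
  match u, v with
  | None, Some z => Defs.rel M x z
  | Some y, Some z => Defs.rel M y z
  | _, _ => False
  end.

Definition fresh_root_valv (p : nat) (u : option (world M)) : R :=
  if u is Some y then valv M p y else 0.

Lemma fresh_root_valv_bounded (p : nat) (u : option (world M)) :
  - bound M <= fresh_root_valv p u <= bound M.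
Proof.
case: u => [y|]; first exact: valv_bounded.
by have := bound_ge0 M; rewrite /=; lra.
Qed.

Definition fresh_root_model : model :=
  @Model (option (world M)) (inhabits None) fresh_root_rel fresh_root_valv
    (bound M) (bound_ge0 M) fresh_root_valv_bounded.

Lemma value_fresh_root_Some (a : fml) (y : world M) :
  value fresh_root_model a (Some y) = value M a y.
Proof.
elim: a y => [p|a IHa b IHb|a IHa] y //=; first by rewrite IHa IHb.
congr inf; apply/seteqP; split=> r /=.
- by case=> [[z|] //= yz <-]; exists z; rewrite ?IHa.
- by case=> z yz <-; exists (Some z); rewrite ?IHa.
Qed.

Lemma value_fresh_root_Box (a : fml) :
  value fresh_root_model (Box a) None = value M (Box a) x.
Proof.
rewrite /=; congr inf; apply/seteqP; split=> r /=.
- by case=> [[z|] //= xz <-]; exists z; rewrite ?value_fresh_root_Some.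
- by case=> z xz <-; exists (Some z); rewrite ?value_fresh_root_Some.
Qed.

Lemma fresh_root_boxes_vars (G D : seq fml) (P S : seq nat) :
  value fresh_root_model (seq_interp (map Box G ++ map Var P) (map Var S ++ map Box D)) None
  = value M (seq_interp (map Box G) (map Box D)) x.
Proof.
rewrite value_seq_interp_boxes_vars !big1 // subrr add0r !value_seq_interp !big_map.
by congr (_ - _); apply: eq_bigr => a _; apply: value_fresh_root_Box.
Qed.

End FreshRoot.

Lemma valid_boxes_vars_boxes (G D : seq fml) (P S : seq nat) :
  KA_valid_seq (map Box G ++ map Var P) (map Var S ++ map Box D) ->
  KA_valid_seq (map Box G) (map Box D).
Proof.
by move=> valid M x; rewrite -(fresh_root_boxes_vars M x G D P S); apply: valid.
Qed.

Theorem lemma4p8 (Gamma Delta : seq fml) (Pi Sigma : seq nat) :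
  KA_valid_seq (map Box Gamma ++ map Var Pi) (map Var Sigma ++ map Box Delta) ->
  perm_eq Pi Sigma /\ KA_valid_seq (map Box Gamma) (map Box Delta).
Proof.
move=> valid; split.
- exact: valid_boxes_vars_perm_eq valid.
- exact: valid_boxes_vars_boxes valid.
Qed.
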